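(* Let $h:\{0,1\}^*\to\{0,1\}^*$ be the morphism defined by $h(0)=0110100110110010110$ and $h(1)=1001011001001101001$. Then the fixed point $h^\omega(0)$ avoids $\frac{7}{3}^+$-powers; that is, for every $\varepsilon>0$, $h^\omega(0)$ contains no subword that is a $\beta$-power with $\beta\ge\frac{7}{3}+\varepsilon$.
   Context: $h^\omega(0)$ is the infinite word $\lim_{n\to\infty}h^n(0)$ (well defined since $h(0)$ begins with $0$). For a rational $\beta\ge 1$, a $\beta$-power is a word of the form $x^nx'$ with $x$ a nonempty word, $x'$ a prefix of $x$, $n$ a nonnegative integer and $n+|x'|/|x|=\beta$. A word avoids $\alpha^+$-powers if it is $(\alpha+\varepsilon)$-power-free for all $\varepsilon>0$, where $\gamma$-power-free means no subword is a $\beta$-power for any rational $\beta\ge\gamma$. *)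

From mathcomp Require Import all_boot all_order all_algebra.
Set Implicit Arguments. Unset Strict Implicit. Unset Printing Implicit Defensive.
Import Order.TTheory GRing.Theory Num.Theory.

(* Binary alphabet {0,1} encoded as bool: 0 = false, 1 = true. *)
Definition bits (s : seq nat) : seq bool := map (fun k => k == 1%N) s.

Definition h_letter (a : bool) : seq bool :=
  if a then bits [:: 1;0;0;1;0;1;1;0;0;1;0;0;1;1;0;1;0;0;1]%N
  else      bits [:: 0;1;1;0;1;0;0;1;1;0;1;1;0;0;1;0;1;1;0]%N.

Definition h (w : seq bool) : seq bool := flatten (map h_letter w).

Definition hpow (n : nat) : seq bool := iter n h [:: false].

(* x is the infinite word h^omega(0) = lim h^n(0): every h^n(0) is a prefix of x. *)
Definition is_h_omega0 (x : nat -> bool) : Prop :=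
  forall n i, (i < size (hpow n))%N -> x i = nth false (hpow n) i.

Definition factor (x : nat -> bool) (i L : nat) : seq bool :=
  mkseq (fun k => x (i + k)%N) L.

Definition is_power (u : seq bool) (beta : rat) : Prop :=
  exists (y y' : seq bool) (n : nat),
    [/\ y != [::], prefix y' y,
        u = flatten (nseq n y) ++ y' &
        beta = (n%:R + (size y')%:R / (size y)%:R)%R].

Definition power_free (x : nat -> bool) (gamma : rat) : Prop :=
  forall (i L : nat) (beta : rat), (gamma <= beta)%R -> ~ is_power (factor x i L) beta.

Definition avoids_plus (x : nat -> bool) (alpha : rat) : Prop :=
  forall eps : rat, (0 < eps)%R -> power_free x (alpha + eps)%R.

From mathcomp Require Import all_boot all_order all_algebra.
From mathcomp Require Import zify.
Import Order.TTheory GRing.Theory Num.Theory.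

(* The morphism h is 19-uniform and h(1) is the complement of h(0), so every
   position of the fixed point x decodes as x(19m + r) = x(m) xor h(0)_r.
   Suppose a factor of x of length L has period p with 7p < 3L.  If p < 19,
   such a factor lies inside the image of a factor of length 4, and a finite
   check excludes it.  If p >= 19, the factor is at least p + 13 long, and
   every factor of length 13 of x determines its position modulo 19; hence
   19 divides p, and reading the factor through the 19-blocks gives a shorter
   repetition of period p/19 and proportional length: induction on p. *)

Lemma size_h_letter b : size (h_letter b) = 19.
Proof. by case: b. Qed.

Lemma h_cons a w : h (a :: w) = h_letter a ++ h w.
Proof. by []. Qed.

Lemma size_h w : size (h w) = 19 * size w.
Proof. by elim: w => //= a w IH; rewrite h_cons size_cat size_h_letter IH mulnS. Qed.

Lemma nth_h w m r : m < size w -> r < 19 ->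
  nth false (h w) (19 * m + r) = nth false (h_letter (nth false w m)) r.
Proof.
elim: w m => [|a w IH] [|m] //= m_lt r_lt; rewrite h_cons nth_cat size_h_letter.
  by rewrite r_lt.
by rewrite mulnS -addnA ltnNge leq_addr /= addKn IH.
Qed.

Lemma size_hpow n : size (hpow n) = 19 ^ n.
Proof. by elim: n => //= n IH; rewrite size_h IH expnS. Qed.

Lemma h_letter_inj r a b : r < 19 ->
  nth false (h_letter a) r = nth false (h_letter b) r -> a = b.
Proof.
have h1E : h_letter true = map negb (h_letter false) by [].
move=> r_lt; case: a; case: b; rewrite // h1E (nth_map false) ?size_h_letter //.
  by case: nth.
by case: nth.
Qed.

Fixpoint words n : seq (seq bool) :=
  if n is n'.+1 then [seq b :: w | b <- [:: false; true], w <- words n']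
  else [:: [::]].

Lemma mem_words w : w \in words (size w).
Proof. by elim: w => //= a w IH; case: a; rewrite !mem_cat map_f ?orbT. Qed.

(* [l = L - p] for the shortest length [L = 7p/3 + 1] of a repetition of
   period [p] with exponent above 7/3. *)
Lemma h_no_short_repetition p w r : 0 < p < 19 -> size w = 4 -> r < 19 ->
  let l := (7 * p) %/ 3 + 1 - p in
  take l (drop r (h w)) != take l (drop (r + p) (h w)).
Proof.
have check : all (fun p => all (fun w => all (fun r =>
    let l := (7 * p) %/ 3 + 1 - p in
    take l (drop r (h w)) != take l (drop (r + p) (h w)))
  (iota 0 19)) (words 4)) (iota 1 18) by vm_compute.
move=> /andP[p_gt0 p_lt] w_size r_lt.
have w_in : w \in words 4 by rewrite -w_size mem_words.
move/allP: check => /(_ p); rewrite mem_iota p_gt0 => /(_ p_lt).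
move/allP => /(_ w w_in).
by move/allP => /(_ r); rewrite mem_iota => /(_ r_lt).
Qed.

Lemma h_synchronizing u v r r' : size u = 2 -> size v = 2 -> r < 19 -> r' < 19 ->
  take 13 (drop r (h u)) = take 13 (drop r' (h v)) -> r = r'.
Proof.
have check : all (fun u => all (fun v => all (fun r => all (fun r' =>
    (r == r') || (take 13 (drop r (h u)) != take 13 (drop r' (h v))))
  (iota 0 19)) (iota 0 19)) (words 2)) (words 2) by vm_compute.
move=> u_size v_size r_lt r'_lt eq_uv.
have u_in : u \in words 2 by rewrite -u_size mem_words.
have v_in : v \in words 2 by rewrite -v_size mem_words.
move/allP: check => /(_ u u_in) /allP /(_ v v_in).
move/allP => /(_ r); rewrite mem_iota => /(_ r_lt).
move/allP => /(_ r'); rewrite mem_iota => /(_ r'_lt).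
by rewrite eq_uv eqxx orbF => /eqP.
Qed.

Lemma size_factor x i L : size (factor x i L) = L.
Proof. exact: size_mkseq. Qed.

Lemma factor_cat x i a b : factor x i (a + b) = factor x i a ++ factor x (i + a) b.
Proof.
apply: (@eq_from_nth _ false); first by rewrite size_cat !size_mkseq.
move=> k; rewrite size_mkseq => k_lt.
rewrite /factor nth_cat size_mkseq (nth_mkseq _ _ k_lt).
case: ltnP => [k_lt_a|a_le]; first by rewrite nth_mkseq.
by rewrite nth_mkseq -?addnA ?subnKC //; lia.
Qed.

Lemma factor_sub x i r L M : r + L <= M ->
  take L (drop r (factor x i M)) = factor x (i + r) L.
Proof.
move=> le_M; have -> : M = r + (L + (M - r - L)) by lia.
by rewrite !factor_cat drop_size_cat ?size_factor // take_size_cat ?size_factor.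
Qed.

Lemma is_power_period (u : seq bool) beta : is_power u beta ->
  exists2 p, 0 < p & (beta * p%:R = (size u)%:R)%R /\
    forall k, k + p < size u -> nth false u k = nth false u (k + p).
Proof.
case=> y [y' [n [y_neq0 /prefixP[z yE] -> ->]]].
have p_gt0 : 0 < size y by rewrite lt0n size_eq0.
have size_u : size (flatten (nseq n y) ++ y') = n * size y + size y'.
  by rewrite size_cat size_flatten /shape map_nseq sumn_nseq mulnC.
have nth_u k : k < n * size y + size y' ->
    nth false (flatten (nseq n y) ++ y') k = nth false y (k %% size y).
  elim: n k {size_u} => [|n IH] k k_lt /=.
    have k_lt' : k < size y' by lia.
    rewrite modn_small; last by rewrite yE size_cat; lia.
    by rewrite yE nth_cat k_lt'.
  rewrite -catA nth_cat; case: ltnP => [|le_k]; first by move/modn_small->.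
  by rewrite IH -?(modnDr (k - size y)) ?subnK //; lia.
exists (size y) => //; rewrite size_u; split.
  by rewrite natrD natrM mulrDl mulfVK // pnatr_eq0 -lt0n.
by move=> k k_lt; rewrite !nth_u ?modnDr //; lia.
Qed.

Lemma ratio_lt a b p L (beta : rat) : 0 < p ->
  (a%:R / b%:R < beta)%R -> (beta * p%:R = L%:R)%R -> 0 < b -> a * p < b * L.
Proof.
move=> p_gt0 lt_beta betaE b_gt0.
have b_pos : (0 < b%:R :> rat)%R by rewrite ltr0n.
have p_pos : (0 < p%:R :> rat)%R by rewrite ltr0n.
rewrite -(ltr_nat rat) !natrM -betaE mulrA.
by rewrite ltr_pM2r // mulrC -ltr_pdivrMr.
Qed.

Definition has_period (x : nat -> bool) i L p : Prop :=
  forall k, k + p < L -> x (i + k) = x (i + k + p).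

Lemma has_period_le x i L L' p : L' <= L -> has_period x i L p -> has_period x i L' p.
Proof. by move=> le_L per k k_lt; apply: per; lia. Qed.

Lemma has_period_factor x i L p : has_period x i L p ->
  factor x i (L - p) = factor x (i + p) (L - p).
Proof.
move=> per; rewrite /factor /mkseq; apply/eq_in_map => k; rewrite mem_iota add0n => k_lt /=.
by rewrite addnAC; apply: per; lia.
Qed.

Section FixedPoint.
Variable x : nat -> bool.
Hypothesis x_fix : is_h_omega0 x.

Lemma x_block m r : r < 19 -> x (19 * m + r) = nth false (h_letter (x m)) r.
Proof.
move=> r_lt; have m_lt : m < 19 ^ m by apply: ltn_expl.
rewrite (x_fix m.+1); last by rewrite size_hpow expnS; lia.
by rewrite [hpow _]/= nth_h ?size_hpow // -x_fix ?size_hpow.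
Qed.

Lemma factor_blocks m n : factor x (19 * m) (19 * n) = h (factor x m n).
Proof.
elim: n m => [|n IH] m; first by rewrite muln0.
have -> : factor x m n.+1 = x m :: factor x m.+1 n.
  by rewrite -add1n factor_cat /= addn0 addn1.
rewrite mulnS factor_cat -mulnSr IH h_cons; congr (_ ++ _).
apply: (@eq_from_nth _ false); rewrite size_mkseq ?size_h_letter // => r r_lt.
by rewrite nth_mkseq // x_block // addn0.
Qed.

Lemma factor_in_blocks m r L n : r + L <= 19 * n ->
  factor x (19 * m + r) L = take L (drop r (h (factor x m n))).
Proof. by move=> le_L; rewrite -factor_blocks factor_sub. Qed.

Lemma factor_at i L n : i %% 19 + L <= 19 * n ->
  factor x i L = take L (drop (i %% 19) (h (factor x (i %/ 19) n))).
Proof. by move=> le_L; rewrite {1}(divn_eq i 19) mulnC (factor_in_blocks _ _ _ n). Qed.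

Lemma has_period_desubst m r L q : r < 19 ->
  has_period x (19 * m + r) L (19 * q) -> has_period x m ((L + 18) %/ 19) q.
Proof.
move=> r_lt per k k_lt; apply: (@h_letter_inj r) => //.
have lt_L : 19 * (k + q) < L by move: k_lt; rewrite leq_divRL //; lia.
rewrite -!x_block // -!addnA; have := per (19 * k) ltac:(lia).
by congr (x _ = x _); lia.
Qed.

Lemma no_short_period i L p : 0 < p < 19 -> 7 * p < 3 * L -> ~ has_period x i L p.
Proof.
move=> p_range lt_L per.
have /has_period_factor : has_period x i ((7 * p) %/ 3 + 1) p.
  by apply: has_period_le per; lia.
rewrite (divn_eq i 19) -addnA mulnC.
rewrite (factor_in_blocks _ _ _ 4) ?(factor_in_blocks _ (i %% 19 + p) _ 4); try lia.
by move/eqP; apply/negP; apply: h_no_short_repetition; rewrite ?ltn_mod.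
Qed.

Lemma long_period_dvd i L p : p + 13 <= L -> has_period x i L p -> 19 %| p.
Proof.
move=> le_L per.
have /has_period_factor : has_period x i (p + 13) p by apply: has_period_le per.
rewrite addKn (factor_at i _ 2) ?(factor_at (i + p) _ 2); try lia.
move/h_synchronizing; rewrite !size_factor !ltn_mod => /(_ erefl erefl isT isT) eq_r.
by rewrite /dvdn; apply/eqP; lia.
Qed.

Lemma no_long_repetition p i L : 0 < p -> 7 * p < 3 * L -> ~ has_period x i L p.
Proof.
elim/ltn_ind: p i L => p IH i L p_gt0 lt_L per.
have [p_lt | p_ge] := ltnP p 19.
  by apply: no_short_period lt_L per; rewrite p_gt0.
have /dvdnP[q pE] : 19 %| p by apply: long_period_dvd per; lia.
rewrite pE mulnC (divn_eq i 19) mulnC in per.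
move/has_period_desubst: per => /(_ (ltn_mod i 19)).
by apply: IH; lia.
Qed.

End FixedPoint.

Theorem theorem13 :
  forall x : nat -> bool, is_h_omega0 x -> avoids_plus x (7%:R / 3%:R)%R.
Proof.
move=> x x_fix eps eps_gt0 i L beta le_beta /is_power_period[p p_gt0].
rewrite size_mkseq => -[betaE per].
apply: (@no_long_repetition x x_fix p i L p_gt0).
  apply: ratio_lt p_gt0 _ betaE _ => //.
  by apply: lt_le_trans le_beta; rewrite ltrDl.
move=> k k_lt; have := per k k_lt.
by rewrite !nth_mkseq -?addnA //; lia.
Qed.
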